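(* Let $P=\{S_1,\ldots,S_n\}$ be a homothetic square packing with contact graph $G=([n],E)$ whose radii $r_1,\ldots,r_n$ satisfy the weak generic condition. If either of the graphs $([n],E_x)$, $([n],E_y)$ contains a cycle $(n_1,\ldots,n_k)$ with $k\le n-2$, then $k=4$ and the squares $S_{n_1},S_{n_2},S_{n_3},S_{n_4}$ share a corner.
   Context: Let $S=\{(x,y): -1\le x,y\le 1\}$. A homothetic packing of $n$ squares is a set $P=\{S_1,\ldots,S_n\}$ with $S_i=r_iS+p_i$, $r_i>0$ (radii), $p_i=(x_i,y_i)\in\mathbb{R}^2$ (centres), such that distinct squares have disjoint interiors. Its contact graph is $G=([n],E)$ where $\{i,j\}\in E$ iff $i\ne j$ and $S_i\cap S_j\ne\emptyset$; $E_x$ is the set of pairs $\{i,j\}\in E$ with $r_i+r_j=|x_i-x_j|\ge|y_i-y_j|$ and $E_y$ the set with $r_i+r_j=|y_i-y_j|\ge|x_i-x_j|$. The radii satisfy the weak generic condition if the only function $\sigma:[n]\to\{-1,0,1\}$ with at least $4$ zeroes and $\sum_{i=1}^n\sigma_ir_i=0$ is the zero function. Four squares share a corner if they have a common point which is a corner of each of them. *)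

From HB Require Import structures.
From mathcomp Require Import all_boot all_order all_algebra.
From mathcomp Require Import reals.
Set Implicit Arguments. Unset Strict Implicit. Unset Printing Implicit Defensive.
Import Order.TTheory GRing.Theory Num.Theory.
Local Open Scope ring_scope.

(* The square r S + c, with S = [-1,1]^2: closed square, and its interior. *)
Definition in_square (R : realType) (r : R) (c q : R * R) : Prop :=
  `|q.1 - c.1| <= r /\ `|q.2 - c.2| <= r.
Definition in_interior (R : realType) (r : R) (c q : R * R) : Prop :=
  `|q.1 - c.1| < r /\ `|q.2 - c.2| < r.
Definition is_corner (R : realType) (r : R) (c q : R * R) : Prop :=
  (q.1 = c.1 + r \/ q.1 = c.1 - r) /\ (q.2 = c.2 + r \/ q.2 = c.2 - r).

Definition is_packing (R : realType) (n : nat) (r : 'I_n -> R) (p : 'I_n -> R * R) : Prop :=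
  (forall i, 0 < r i) /\
  (forall i j, i != j -> forall q,
      ~ (in_interior (r i) (p i) q /\ in_interior (r j) (p j) q)).

Definition contact (R : realType) (n : nat) (r : 'I_n -> R) (p : 'I_n -> R * R) (i j : 'I_n) : Prop :=
  i != j /\ exists q, in_square (r i) (p i) q /\ in_square (r j) (p j) q.

Definition Ex (R : realType) (n : nat) (r : 'I_n -> R) (p : 'I_n -> R * R) (i j : 'I_n) : Prop :=
  contact r p i j /\ r i + r j = `|(p i).1 - (p j).1| /\
  `|(p i).2 - (p j).2| <= `|(p i).1 - (p j).1|.
Definition Ey (R : realType) (n : nat) (r : 'I_n -> R) (p : 'I_n -> R * R) (i j : 'I_n) : Prop :=
  contact r p i j /\ r i + r j = `|(p i).2 - (p j).2| /\
  `|(p i).1 - (p j).1| <= `|(p i).2 - (p j).2|.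

Definition weak_generic (R : realType) (n : nat) (r : 'I_n -> R) : Prop :=
  forall sigma : 'I_n -> int,
    (forall i, sigma i \in [:: -1; 0; 1]) ->
    (4 <= #|[set i | sigma i == 0]|)%N ->
    \sum_(i < n) (sigma i)%:~R * r i = 0 ->
    forall i, sigma i = 0.

Definition is_cycle (n k : nat) (e : 'I_n -> 'I_n -> Prop) (c : 'I_k -> 'I_n) : Prop :=
  (3 <= k)%N /\ injective c /\ forall j : 'I_k, e (c j) (c (ordS j)).

From HB Require Import structures.
From mathcomp Require Import all_boot all_order all_algebra.
From mathcomp Require Import reals.
From mathcomp Require Import lra zify.
Set Implicit Arguments. Unset Strict Implicit. Unset Printing Implicit Defensive.
Import Order.TTheory GRing.Theory Num.Theory.

(* Walking once around an E_x-cycle, each step moves the centre horizontally by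
   +-(r_i + r_(i+1)), and the steps sum to zero. Regrouping gives a relation
   sum_i tau_i r_i = 0 with tau_i in {-1, 0, 1} vanishing exactly where the
   horizontal direction reverses. Reversals are nonzero and even in number, so
   with the >= 2 squares off the cycle there are >= 4 zeros, and the weak generic
   condition forces tau = 0: the direction alternates. Hence all squares of the
   cycle touch one vertical line, alternately from the left and from the right;
   squares on the same side have disjoint vertical extents, and consecutive
   squares have overlapping ones. Around the lowest square on the left, these
   interval constraints leave two possibilities: the cycle closes after four
   steps around a common corner on the line, or some left and right squares have
   the same vertical extent, hence equal radii, which the weak generic condition
   excludes. The E_y case follows by exchanging the coordinates. *)

Section CyclicOrdinals.
Variable k : nat.
Implicit Types i j : 'I_k.

Lemma val_iter_ordS j m : val (iter m (@ordS k) j) = ((j + m) %% k)%N.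
Proof.
elim: m => [|m IH] /=; first by rewrite addn0 modn_small.
by rewrite IH addnS -addn1 modnDml addn1.
Qed.

Lemma iter_ordS_sub i j : iter ((i + k - j) %% k) (@ordS k) j = i.
Proof.
apply: val_inj; rewrite val_iter_ordS modnDmr subnKC ?modnDr ?modn_small //.
exact: leq_trans (ltnW (ltn_ord j)) (leq_addl i k).
Qed.

Lemma iter_ordS_id j m : (iter m (@ordS k) j == j) = (k %| m).
Proof.
rewrite -val_eqE val_iter_ordS /=.
have {2}-> : nat_of_ord j = ((j + 0) %% k)%N by rewrite addn0 modn_small.
by rewrite eqn_modDl mod0n.
Qed.

Lemma ordS_invariant_const T (f : 'I_k -> T) :
  (forall j, f (ordS j) = f j) -> forall i j, f i = f j.
Proof.
move=> fS i j; rewrite -(iter_ordS_sub i j).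
by elim: (_ %% k) => [|m IH] //=; rewrite fS.
Qed.

Lemma ordS_ordS_neq j : 3 <= k -> ordS (ordS j) != j.
Proof.
move=> k3; have := iter_ordS_id j 2; rewrite /= => ->.
by apply: contraL k3 => /(dvdn_leq (isT : 0 < 2)); rewrite -leqNgt.
Qed.

Lemma alternating_iter_ordS (b : 'I_k -> bool) m j :
  (forall i, b (ordS i) = ~~ b i) -> b (iter m (@ordS k) j) = odd m (+) b j.
Proof. by move=> bS; elim: m => [|m IH] //=; rewrite bS IH addNb. Qed.

Lemma alternating_even (b : 'I_k -> bool) j :
  (forall i, b (ordS i) = ~~ b i) -> ~~ odd k.
Proof.
move=> bS; have /eqP iter_k : iter k (@ordS k) j == j by rewrite iter_ordS_id.
by have := alternating_iter_ordS k j bS; rewrite iter_k; case: (odd k); case: (b j).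
Qed.

Lemma sign_changes_even (b : 'I_k -> bool) : ~~ odd #|[set j | b (ordS j) != b j]|.
Proof.
rewrite -sum1_card (big_morph odd oddD (erefl : odd 0 = false)) big_mkcond /=.
rewrite (eq_bigr (fun j => b (ordS j) (+) b j)) => [|j _]; last first.
  by rewrite inE; case: (b _); case: (b _).
by rewrite big_split /= [X in _ (+) X](reindex_inj (@ordS_inj k)) addbb.
Qed.

Lemma length4_of_ordS2_eq_pred2 j :
  3 <= k -> ordS (ordS j) = ord_pred (ord_pred j) -> k = 4.
Proof.
move=> k3 e; have : iter 4 (@ordS k) j == j by rewrite /= e !ord_predK.
rewrite iter_ordS_id => dk; have := dvdn_leq (isT : 0 < 4) dk.
have : k != 3 by apply: contraTneq dk => ->.
lia.
Qed.

Lemma mem_cycle4 i j : k = 4 -> i \in [:: j; ordS j; ord_pred j; ordS (ordS j)].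
Proof.
move=> k4; have ordS4 : iter 4 (@ordS k) j = j by apply/eqP; rewrite iter_ordS_id k4.
rewrite -(iter_ordS_sub i j).
have : (i + k - j) %% k < 4 by rewrite -[X in _ < X]k4 ltn_pmod ?k4.
have pred3 : iter 3 (@ordS k) j = ord_pred j by apply: ordS_inj; rewrite ord_predK.
by case: (_ %% k) => [|[|[|[|m]]]] // _; rewrite ?pred3 /= !inE eqxx ?orbT.
Qed.

End CyclicOrdinals.

Local Open Scope ring_scope.

Lemma telescope_ordS (V : zmodType) k (f : 'I_k -> V) : \sum_j (f (ordS j) - f j) = 0.
Proof. by rewrite sumrB [X in _ - X](reindex_inj (@ordS_inj k)) subrr. Qed.

Definition bsign (s : bool) : int := if s then 1 else -1.

Definition bsign_mean (s s' : bool) : int := if s == s' then bsign s else 0.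

Lemma bsignD s s' : bsign s + bsign s' = bsign_mean s s' *+ 2.
Proof. by case: s; case: s'. Qed.

Lemma bsign_mean_eq0 s s' : (bsign_mean s s' == 0) = (s != s').
Proof. by case: s; case: s'. Qed.

Lemma bsign_mean_sign s s' : bsign_mean s s' \in [:: -1; 0; 1].
Proof. by case: s; case: s'. Qed.

Section WeakGeneric.
Variables (R : realType) (n : nat) (r : 'I_n -> R).
Hypothesis r_generic : weak_generic r.

Lemma weak_generic_comp (I : finType) (h : I -> 'I_n) (tau : I -> int) :
  injective h -> (forall j, tau j \in [:: -1; 0; 1]) ->
  (4 <= #|[set j | tau j == 0%R]| + (n - #|I|))%N ->
  \sum_j (tau j)%:~R * r (h j) = 0 -> forall j, tau j = 0.
Proof.
move=> h_inj tau_sign zeros tau_sum.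
pose sigma i := if [pick j | h j == i] is Some j then tau j else 0.
have sigma_h j : sigma (h j) = tau j.
  by rewrite /sigma; case: pickP => [j' /eqP /h_inj -> //|/(_ j)]; rewrite eqxx.
have sigma_sign i : sigma i \in [:: -1; 0; 1] by rewrite /sigma; case: pickP.
have sigma_sum : \sum_i (sigma i)%:~R * r i = 0.
  rewrite -[RHS]tau_sum [RHS](partition_big h xpredT) //=; apply: eq_bigr => i _.
  rewrite /sigma; case: pickP => [j /eqP hj | none]; last first.
    by rewrite big_pred0 ?mul0r // => j; rewrite none.
  rewrite (big_pred1 j) ?hj // => j'; apply/eqP/eqP => [/eqP|->//].
  by rewrite -hj => /eqP /h_inj.
have sigma_zeros : (4 <= #|[set i | sigma i == 0%R]|)%N.
  have sub : ~: (h @: [set j | tau j != 0]) \subset [set i | sigma i == 0].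
    apply/subsetP => i; rewrite !inE /sigma; case: pickP => [j /eqP hj|//].
    by rewrite -hj (mem_imset _ _ h_inj) inE negbK.
  have nonzeroC : [set j | tau j != 0] = ~: [set j | tau j == 0].
    by apply/setP => j; rewrite !inE.
  have := subset_leq_card sub; have := cardsC (h @: [set j | tau j != 0]).
  have := cardsC [set j | tau j == 0]; have := leq_card h h_inj.
  by rewrite card_imset // !card_ord nonzeroC; set m := #|I|; lia.
by move=> j; rewrite -sigma_h; apply: r_generic.
Qed.

Lemma weak_generic_injective : (6 <= n)%N -> injective r.
Proof.
move=> n6 i i' r_eq; apply/eqP; apply: contraT => neq.
pose h (s : bool) := if s then i else i'.
have h_inj : injective h.
  by do 2![case] => //= /eqP; rewrite ?(negbTE neq) // eq_sym (negbTE neq).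
have zeros : (4 <= #|[set s | bsign s == 0%R]| + (n - #|{: bool}|))%N.
  by rewrite card_bool; lia.
have bsign_sum : \sum_s (bsign s)%:~R * r (h s) = 0.
  by rewrite big_bool /= r_eq mulNr mul1r addrN.
have bsign_sign s : bsign s \in [:: -1; 0; 1] by case: s.
by have := weak_generic_comp h_inj bsign_sign zeros bsign_sum true.
Qed.

End WeakGeneric.

Lemma open_intervals_meet (R : realFieldType) (a1 b1 a2 b2 : R) :
  a1 < b1 -> a2 < b2 -> a1 < b2 -> a2 < b1 -> exists2 t, a1 < t < b1 & a2 < t < b2.
Proof.
move=> *; case: (lerP a1 a2) => ?; case: (lerP b1 b2) => ?.
- by exists ((a2 + b1) / 2); apply/andP; split; lra.
- by exists ((a2 + b2) / 2); apply/andP; split; lra.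
- by exists ((a1 + b1) / 2); apply/andP; split; lra.
- by exists ((a1 + b2) / 2); apply/andP; split; lra.
Qed.

Lemma packing_separated (R : realType) n (r : 'I_n -> R) p i j :
  is_packing r p -> i != j ->
  r i + r j <= `|(p i).1 - (p j).1| \/ r i + r j <= `|(p i).2 - (p j).2|.
Proof.
move=> [r_pos disjoint] ij.
case: (lerP (r i + r j) `|(p i).1 - (p j).1|) => [|dx]; first by left.
case: (lerP (r i + r j) `|(p i).2 - (p j).2|) => [|dy]; first by right.
have ri := r_pos i; have rj := r_pos j.
move: dx dy; rewrite !ltr_norml => /andP [? ?] /andP [? ?].
have [t1 /andP [? ?] /andP [? ?]] :=
  @open_intervals_meet R ((p i).1 - r i) ((p i).1 + r i) ((p j).1 - r j) ((p j).1 + r j)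
    ltac:(lra) ltac:(lra) ltac:(lra) ltac:(lra).
have [t2 /andP [? ?] /andP [? ?]] :=
  @open_intervals_meet R ((p i).2 - r i) ((p i).2 + r i) ((p j).2 - r j) ((p j).2 + r j)
    ltac:(lra) ltac:(lra) ltac:(lra) ltac:(lra).
exfalso; apply: (disjoint i j ij (t1, t2)).
by rewrite /in_interior /= !ltr_norml; split; split; apply/andP; split; lra.
Qed.

Section AlternatingIntervals.
Variables (R : realType) (I : finType) (side : I -> bool) (lo hi : I -> R).
Hypothesis lo_lt_hi : forall j, lo j < hi j.
Hypothesis same_side_apart :
  forall j j', j != j' -> side j = side j' -> hi j <= lo j' \/ hi j' <= lo j.
Variable a : I.
Hypothesis side_a : side a.
Hypothesis lo_a_min : forall j, side j -> lo a <= lo j.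

Definition intervals_meet j j' := lo j <= hi j' /\ lo j' <= hi j.

Definition alternating_cycle (N P : I -> I) :=
  [/\ cancel N P, cancel P N, forall j, N (N j) != j,
      forall j, side (N j) = ~~ side j & forall j, intervals_meet j (N j)].

Definition common_corner_or_twins (N P : I -> I) :=
  (N (N a) = P (P a) /\
   forall j, j \in [:: a; N a; P a; N (N a)] -> lo j = hi a \/ hi j = hi a)
  \/ exists j j', [/\ side j != side j', lo j = lo j' & hi j = hi j'].

Lemma alternating_cycle_sym N P : alternating_cycle N P -> alternating_cycle P N.
Proof.
case=> NK PK NN_neq side_N meet_N; split=> // j.
- by apply: contra (NN_neq j) => /eqP PPj; rewrite -{1}PPj !PK.
- by rewrite -{2}(PK j) side_N negbK.
- by have [] := meet_N (P j); rewrite PK.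
Qed.

Lemma apart_below j j' : j != j' -> side j = side j' -> lo j' < hi j -> hi j' <= lo j.
Proof. by move=> neq /(same_side_apart neq) [] // ? ?; lra. Qed.

Lemma hi_a_le_lo j : side j -> j != a -> hi a <= lo j.
Proof.
move=> side_j ja; apply: apart_below ja _ _; first by rewrite side_j side_a.
by have := lo_a_min side_j; have := lo_lt_hi j; lra.
Qed.

Lemma common_corner_or_twins_oriented N P :
  alternating_cycle N P -> hi (N a) <= lo (P a) -> common_corner_or_twins N P.
Proof.
move=> cyc; have [NK PK NN_neq side_N meet_N] := cyc.
have [_ _ PP_neq side_P meet_P] := alternating_cycle_sym cyc.
rewrite /common_corner_or_twins; set d := N a; set e := P a; set a2 := N d => d_below_e.
have side_d : side d = false by rewrite side_N side_a.
have side_e : side e = false by rewrite side_P side_a.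
have side_a2 : side a2 by rewrite side_N side_d.
(* hi d <= lo e <= hi a <= lo a2 <= hi d *)
have [hi_d lo_e lo_a2] : [/\ hi d = hi a, lo e = hi a & lo a2 = hi a].
  have := (meet_P a).2; have := (meet_N d).2; have := hi_a_le_lo side_a2 (NN_neq a).
  by split; lra.
have [a2_e | d'_ne_e] := eqVneq (N a2) e.
  left; split=> [|j]; first by rewrite -a2_e NK.
  by rewrite !inE => /or4P [] /eqP ->; [right | right | left | left].
right; set d' := N a2 in d'_ne_e *; set a3 := P e.
have side_d' : side d' = false by rewrite side_N side_a2.
have side_a3 : side a3 by rewrite side_P side_e.
have a3_ne_a2 : a3 != a2 by apply: contra d'_ne_e => /eqP a3_a2; rewrite /d' -a3_a2 PK.
have [lo_a2_d' lo_d'_a2] := meet_N a2.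
have lo_a3_e := (meet_P e).2.
have d_below_d' : hi d <= lo d'.
  apply: apart_below (NN_neq d) _ _; first by rewrite side_d' side_d.
  by have := lo_lt_hi d; lra.
have e_below_d' : hi e <= lo d'.
  apply: apart_below d'_ne_e _ _; first by rewrite side_d' side_e.
  by have := lo_lt_hi d'; lra.
have a2_below_a3 : hi a2 <= lo a3.
  apply: apart_below a3_ne_a2 _ _; first by rewrite side_a3 side_a2.
  by have := lo_lt_hi a3; have := hi_a_le_lo side_a3 (PP_neq a); lra.
(* hi e <= lo d' <= hi a2 <= lo a3 <= hi e *)
by exists a2, e; rewrite side_a2 side_e; split=> //; lra.
Qed.

Lemma common_corner_or_twins_cycle N P :
  alternating_cycle N P -> common_corner_or_twins N P.
Proof.
move=> cyc; have [NK PK NN_neq side_N _] := cyc.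
have [_ _ _ side_P _] := alternating_cycle_sym cyc.
have Na_ne_Pa : N a != P a by apply: contra (NN_neq a) => /eqP ->; rewrite PK.
have := same_side_apart Na_ne_Pa; rewrite side_N side_P => /(_ erefl).
case=> [|P_below_N]; first exact: common_corner_or_twins_oriented.
have [[PPa corner]|] := common_corner_or_twins_oriented (alternating_cycle_sym cyc) P_below_N;
  last by right.
left; split=> // j j_in; apply: corner; move: j_in; rewrite !inE -PPa.
by case/or4P=> ->; rewrite ?orbT.
Qed.

End AlternatingIntervals.

Section ExCycle.
Variables (R : realType) (n : nat) (r : 'I_n -> R) (p : 'I_n -> R * R).
Variables (k : nat) (c : 'I_k -> 'I_n).
Hypotheses (packing : is_packing r p) (r_generic : weak_generic r).
Hypotheses (cycle_Ex : is_cycle (Ex r p) c) (k_le : (k <= n - 2)%N).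

Let x j := (p (c j)).1.
Let y j := (p (c j)).2.
Let rho j := r (c j).
Let rightward j := x j < x (ordS j).
Let j0 : 'I_k := Ordinal (leq_trans (isT : (0 < 3)%N) cycle_Ex.1).

Lemma rho_gt0 j : 0 < rho j.
Proof. exact: packing.1. Qed.

Lemma Ex_step j :
  `|x j - x (ordS j)| = rho j + rho (ordS j) /\ `|y j - y (ordS j)| <= `|x j - x (ordS j)|.
Proof. by have [_ [_ /(_ j) [_ [-> ?]]]] := cycle_Ex. Qed.

Lemma x_step j : x (ordS j) - x j = (bsign (rightward j))%:~R * (rho j + rho (ordS j)).
Proof.
rewrite -(Ex_step j).1 /rightward /bsign.
by case: ltrP => ?; rewrite ?mul1r ?mulN1r; lra.
Qed.

Lemma signed_radii_sum :
  \sum_j (bsign (rightward (ordS j)) + bsign (rightward j))%:~R * rho (ordS j) = 0.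
Proof.
rewrite -[RHS](telescope_ordS x); under [RHS]eq_bigr do rewrite x_step mulrDr.
rewrite big_split /= [X in X + _](reindex_inj (@ordS_inj k)) -big_split /=.
by apply: eq_bigr => j _; rewrite intrD mulrDl.
Qed.

Let tau j := bsign_mean (rightward (ordS j)) (rightward j).

Lemma direction_weighted_sum : \sum_j (tau j)%:~R * rho (ordS j) = 0.
Proof.
suff : (\sum_j (tau j)%:~R * rho (ordS j)) *+ 2 = 0 by move/eqP; rewrite mulrn_eq0 => /eqP.
rewrite -sumrMnl -[RHS]signed_radii_sum; apply: eq_bigr => j _.
by rewrite -mulrnAl -raddfMn -bsignD.
Qed.

Lemma direction_changes : [exists j, rightward (ordS j) != rightward j].
Proof.
apply: contraT; rewrite negb_exists => /forallP same.
have {}same j : rightward (ordS j) = rightward j by apply/eqP; have := same j; rewrite negbK.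
have sum_gt0 : 0 < \sum_j rho (ordS j).
  rewrite (bigD1 j0) //=; have := rho_gt0 (ordS j0).
  have : 0 <= \sum_(j | j != j0) rho (ordS j) by apply: sumr_ge0 => j _; exact/ltW/rho_gt0.
  lra.
have := direction_weighted_sum; rewrite /tau.
under eq_bigr do rewrite same /bsign_mean eqxx (ordS_invariant_const same _ j0).
by rewrite -mulr_sumr /bsign; case: (rightward j0); rewrite ?mul1r ?mulN1r; lra.
Qed.

Lemma two_le_direction_changes : (2 <= #|[set j | tau j == 0%R]|)%N.
Proof.
have -> : [set j | tau j == 0%R] = [set j | rightward (ordS j) != rightward j].
  by apply/setP => j; rewrite !inE bsign_mean_eq0.
have := sign_changes_even rightward; have /existsP [j1 change_j1] := direction_changes.
have /card_gt0P : exists j, j \in [set j | rightward (ordS j) != rightward j].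
  by exists j1; rewrite inE.
by case: #|_| => [|[|m]].
Qed.

Lemma rightward_alternates j : rightward (ordS j) = ~~ rightward j.
Proof.
have [k3 [c_inj _]] := cycle_Ex.
have h_inj : injective (fun i => c (ordS i)) by move=> i i' /c_inj /ordS_inj.
have zeros : (4 <= #|[set i | tau i == 0%R]| + (n - #|{: 'I_k}|))%N.
  by have := two_le_direction_changes; rewrite card_ord; lia.
have := weak_generic_comp r_generic h_inj (fun i => bsign_mean_sign _ _) zeros
  direction_weighted_sum j.
by move/eqP; rewrite bsign_mean_eq0; case: (rightward (ordS j)); case: (rightward j).
Qed.

Lemma four_le_cycle_length : (4 <= k)%N.
Proof.
have := alternating_even j0 rightward_alternates; move: cycle_Ex.1.
by case: k => [|[|[|[|]]]].
Qed.

Lemma vertical_line : exists L, forall j, x j + (bsign (rightward j))%:~R * rho j = L.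
Proof.
pose g j := x j + (bsign (rightward j))%:~R * rho j.
have g_ordS i : g (ordS i) = g i.
  have := x_step i; rewrite /g rightward_alternates /bsign.
  by case: (rightward i); rewrite /= ?mul1r ?mulN1r; lra.
by exists (g j0) => j; apply: ordS_invariant_const g_ordS j j0.
Qed.

Let lo j := y j - rho j.
Let hi j := y j + rho j.

Lemma lo_lt_hi j : lo j < hi j.
Proof. by have := rho_gt0 j; rewrite /lo /hi; lra. Qed.

Lemma same_side_apart j j' :
  j != j' -> rightward j = rightward j' -> hi j <= lo j' \/ hi j' <= lo j.
Proof.
move=> neq same_side; have [_ [c_inj _]] := cycle_Ex.
have c_neq : c j != c j' by rewrite (inj_eq c_inj).
have [L on_L] := vertical_line; have := on_L j; have := on_L j'.
have := rho_gt0 j; have := rho_gt0 j'.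
rewrite /lo /hi /x /y /rho same_side /bsign; case: (packing_separated packing c_neq).
- by rewrite ler_normr; case: (rightward j') => /orP [] ?; rewrite ?mul1r ?mulN1r; lra.
- by rewrite ler_normr => /orP [] ? *; lra.
Qed.

Lemma consecutive_meet j : intervals_meet lo hi j (ordS j).
Proof.
have [gap] := Ex_step j; rewrite gap ler_norml /intervals_meet /lo /hi => /andP [? ?].
by split; lra.
Qed.

Lemma Ex_cycle_common_corner :
  k = 4%N /\ exists q : R * R, forall j : 'I_k, is_corner (r (c j)) (p (c j)) q.
Proof.
have [k3 [c_inj _]] := cycle_Ex.
have [j1 right_j1] : exists j, rightward j.
  by case E : (rightward j0); [exists j0 | exists (ordS j0); rewrite rightward_alternates E].
have [a right_a lo_a_min] := arg_minP lo right_j1.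
have cyc : alternating_cycle rightward lo hi (@ordS k) (@ord_pred k).
  split; [exact: ordSK | exact: ord_predK | move=> j; exact: ordS_ordS_neq k3 |
          exact: rightward_alternates | exact: consecutive_meet].
have [[pred2 corner] | [j [j' [sides lo_eq hi_eq]]]] :=
  common_corner_or_twins_cycle lo_lt_hi same_side_apart right_a lo_a_min cyc.
  have k4 := length4_of_ordS2_eq_pred2 k3 pred2.
  have [L on_L] := vertical_line.
  split=> //; exists (L, hi a) => j.
  have := corner j (mem_cycle4 j a k4); have := on_L j; have := rho_gt0 j.
  rewrite /is_corner /lo /hi /x /y /rho /bsign /=.
  by case: (rightward j); rewrite ?mul1r ?mulN1r => ? ? [] ?; split; lra.
have n6 : (6 <= n)%N by have := four_le_cycle_length; lia.
have r_inj := weak_generic_injective r_generic n6.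
have : j != j' by apply: contraNneq sides => ->.
rewrite -(inj_eq c_inj) -(inj_eq r_inj) => /eqP; case.
by move: lo_eq hi_eq; rewrite /lo /hi /rho; lra.
Qed.

End ExCycle.

Section SwapAxes.
Variables (R : realType) (n : nat) (r : 'I_n -> R) (p : 'I_n -> R * R).

Lemma is_packing_swap : is_packing r p -> is_packing r (fun i => swap_pair (p i)).
Proof.
case=> r_pos disjoint; split=> // i j ij q [[? ?] [? ?]].
by apply: (disjoint i j ij (swap_pair q)).
Qed.

Lemma Ey_swap i j : Ey r p i j -> Ex r (fun i => swap_pair (p i)) i j.
Proof. by case=> [[ij [q [[? ?] [? ?]]]] [? ?]]; do !split=> //; exists (swap_pair q). Qed.

End SwapAxes.

Lemma is_corner_swap (R : realType) (r : R) (c q : R * R) :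
  is_corner r (swap_pair c) q -> is_corner r c (swap_pair q).
Proof. by case. Qed.

Theorem lemma17 (R : realType) (n : nat) (r : 'I_n -> R) (p : 'I_n -> R * R)
  (k : nat) (c : 'I_k -> 'I_n) :
  is_packing r p -> weak_generic r ->
  (is_cycle (Ex r p) c \/ is_cycle (Ey r p) c) ->
  (k <= n - 2)%N ->
  k = 4%N /\ exists q : R * R, forall j : 'I_k, is_corner (r (c j)) (p (c j)) q.
Proof.
move=> packing r_generic [cycle_Ex | [k3 [c_inj edges_Ey]]] k_le.
  exact: Ex_cycle_common_corner.
have cycle_Ex : is_cycle (Ex r (fun i => swap_pair (p i))) c.
  by do 2!split=> //; move=> j; apply: Ey_swap.
have [k4 [q corner]] :=
  Ex_cycle_common_corner (is_packing_swap packing) r_generic cycle_Ex k_le.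
by split=> //; exists (swap_pair q) => j; apply: is_corner_swap.
Qed.
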